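(* Let $G$ be a full 1-plane graph satisfying the kite-edge standing assumption, and let $S$ be a minimal separating set of $G$. Then every transition face $F$ of $G^\times$ has, on its boundary walk, at least two occurrences of vertices of $S$ (either two distinct vertices of $S$, or two incidences with the same vertex of $S$).
   Context: A 1-plane graph is a graph $G$ with a good drawing in the plane (edges are simple curves; two edges intersect only at a common endpoint or a proper crossing; any two edges intersect at most once; no three edges cross at one point) in which every edge is crossed at most once. For a crossing of edges $(u,v)$ and $(w,x)$, its endpoints are $u,v,w,x$; two endpoints are consecutive if they are not $\{u,v\}$ and not $\{w,x\}$. $G$ is full 1-plane if for every crossing every two consecutive endpoints are adjacent. The planarization $G^\times$ replaces each crossing point by a new dummy vertex adjacent to the four endpoints. An edge joining consecutive endpoints $u,x$ of a crossing with dummy vertex $c$ is a kite edge if it is uncrossed and $G^\times$ has a face bounded exactly by it and $(u,c),(c,x)$. Standing assumption: for every crossing and every pair of adjacent consecutive endpoints, some edge joining them is a kite edge of that crossing. A separating set $S\subseteq V(G)$ is one with $G-S$ disconnected; the flaps are the connected components of $G-S$. A face $F$ of $G^\times$ is a transition face (with respect to $S$) if $F$ is incident to an edge of $G^\times$ both of whose endpoints are in $S$, or $F$ is incident to vertices from two different flaps of $G-S$. *)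

From mathcomp Require Import all_boot.
Set Implicit Arguments. Unset Strict Implicit. Unset Printing Implicit Defensive.

Section OnePlane.
(* V = real vertices of G, C = crossings (dummy vertices of G^x),
   D = darts (half-edges) of G^x.  alpha = edge involution, sigma = rotation
   around a vertex, vtx d = the vertex of G^x at which dart d starts. *)
Variables (V C D : finType) (alpha sigma : D -> D) (vtx : D -> V + C).

(* face permutation: faces of G^x are the orbits of phi; the boundary walk of
   the face of z visits the corners vtx z, vtx (phi z), ... *)
Definition phi (d : D) : D := sigma (alpha d).

Definition dend (d : D) : V + C := vtx (alpha d).

Definition is_real (x : V + C) : bool := if x is inl _ then true else false.

Definition inS (S : {set V}) (x : V + C) : bool :=
  if x is inl u then u \in S else false.

Definition glink : rel D := fun d e => (e == alpha d) || (e == sigma d).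

(* (D, alpha, sigma, vtx) is a connected plane (genus 0) map without loops
   whose vertex set is exactly V + C. *)
Definition plane_map : Prop :=
  [/\ (forall d, alpha (alpha d) = d),
      (forall d, alpha d != d),
      injective sigma,
      (forall d e, (vtx d == vtx e) = fconnect sigma d e)
    & (forall x, exists d, vtx d = x)] /\
  [/\ (forall d, dend d != vtx d),
      (forall d e, connect glink d e)
    & #|V| + #|C| + fcard phi D = #|D| %/ 2 + 2].

(* every dummy vertex has degree 4, its neighbours are real vertices, and its
   four neighbours are pairwise distinct; the two edges of G crossing at c are
   the ones formed by rotation-opposite darts. *)
Definition crossings_ok : Prop :=
  forall d c, vtx d = inr c ->
    [/\ order sigma d = 4, is_real (dend d)
      & uniq [:: dend d; dend (sigma d); dend (sigma (sigma d));
                 dend (sigma (sigma (sigma d)))]].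

(* adjacency in G: an uncrossed edge u-v, or a crossed edge u-c-v where the two
   halves are opposite at the crossing c *)
Definition Gadj (u v : V) : bool :=
  [exists d, (vtx d == inl u) &&
     ((dend d == inl v) ||
      (~~ is_real (dend d) && (dend (sigma (sigma (alpha d))) == inl v)))].

Definition full : Prop :=
  forall d c u w, vtx d = inr c -> dend d = inl u -> dend (sigma d) = inl w ->
    Gadj u w.

Definition touches (z e : D) : bool :=
  [exists y, fconnect phi z y && ((y == e) || (y == alpha e))].

(* f is (a dart of) a kite edge of the crossing vtx d for the consecutive
   endpoints dend d, dend (sigma d): an uncrossed edge joining them such that
   some face of G^x is bounded exactly by it and the two half-edges at c. *)
Definition kite (d f : D) : bool :=
  [&& is_real (vtx f), is_real (dend f), vtx f == dend d,
      dend f == dend (sigma d) &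
      [exists z, [&& order phi z == 3, touches z f, touches z d
                   & touches z (sigma d)]]].

Definition kite_assumption : Prop :=
  forall d c u w, vtx d = inr c -> dend d = inl u -> dend (sigma d) = inl w ->
    Gadj u w -> exists f, kite d f.

Definition Srel (S : {set V}) : rel V :=
  fun u v => [&& u \notin S, v \notin S & Gadj u v].

Definition separating (S : {set V}) : Prop :=
  exists u v, [/\ u \notin S, v \notin S & ~~ connect (Srel S) u v].

Definition min_separating (S : {set V}) : Prop :=
  separating S /\ forall S' : {set V}, S' \proper S -> ~ separating S'.

Definition transition (S : {set V}) (z : D) : Prop :=
  (exists y, [/\ fconnect phi z y, inS S (vtx y) & inS S (dend y)]) \/
  (exists y1 y2 u1 u2,
      [/\ fconnect phi z y1, fconnect phi z y2, vtx y1 = inl u1, vtx y2 = inl u2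
        & [/\ u1 \notin S, u2 \notin S & ~~ connect (Srel S) u1 u2]]).

Definition S_occurrences (S : {set V}) (z : D) : nat :=
  #|[pred y | fconnect phi z y & inS S (vtx y)]|.

End OnePlane.

From Pilot Require Import Defs.
From mathcomp Require Import all_boot zify.
Set Implicit Arguments. Unset Strict Implicit. Unset Printing Implicit Defensive.

(* Along the boundary walk of a face of G^x, consecutive real
   vertices are either joined by an uncrossed edge or are two endpoints of a
   crossing that are consecutive, hence adjacent because G is full.  So a
   stretch of the walk avoiding S stays inside one flap of G - S.  If the
   face carries an edge inside S, its two ends are two occurrences of S.
   Otherwise it meets two different flaps, and both arcs of the closed walk
   between them must pass through S. *)

Section FaceWalk.
Variables (V C D : finType) (alpha sigma : D -> D) (vtx : D -> V + C).
Hypothesis alphaK : involutive alpha.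
Hypothesis sigma_inj : injective sigma.
Hypothesis vtx_sigma : forall d, vtx (sigma d) = vtx d.
Hypothesis crossings : crossings_ok alpha sigma vtx.
Hypothesis G_full : full alpha sigma vtx.

Local Notation phi := (phi alpha sigma).
Local Notation dend := (dend alpha vtx).
Local Notation Gadj := (Gadj alpha sigma vtx).

Lemma vtx_phi d : vtx (phi d) = dend d.
Proof. exact: vtx_sigma. Qed.

Lemma Gadj_phi d u v : vtx d = inl u -> vtx (phi d) = inl v -> Gadj u v.
Proof.
by move=> Hu Hv; apply/existsP; exists d; rewrite Hu -vtx_phi Hv !eqxx.
Qed.

Lemma Gadj_phi_crossing d u c v :
  vtx d = inl u -> vtx (phi d) = inr c -> vtx (phi (phi d)) = inl v ->
  Gadj u v.
Proof.
move=> Hu Hc Hv; apply: (G_full (d := alpha d) (c := c)).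
- by rewrite -vtx_sigma.
- by rewrite /Defs.dend alphaK.
- by rewrite /Defs.dend -vtx_sigma.
Qed.

Lemma real_around_crossing d c : vtx (phi d) = inr c ->
  is_real (vtx d) /\ is_real (vtx (phi (phi d))).
Proof.
move=> Hc; split.
- have [_ + _] := crossings (d := alpha d) (c := c) (etrans (esym (vtx_phi d)) Hc).
  by rewrite /Defs.dend alphaK.
- by have [_ + _] := crossings Hc; rewrite -vtx_phi.
Qed.

Lemma Gadj_sym u v : Gadj u v -> Gadj v u.
Proof.
case/existsP=> d /andP[/eqP Hu /orP[/eqP Hv|/andP[Hcross /eqP Hv]]].
  by apply: (@Gadj_phi (alpha d)) => //; rewrite vtx_phi /Defs.dend alphaK.
case Hc: (dend d) Hcross => [//|c] _.
have [order4 _ _] := crossings Hc.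
(* [e] is the dart at the crossing opposite to [alpha d]: the far half of the
   crossed edge, read backwards. *)
set e := sigma (sigma (alpha d)).
have He : vtx e = inr c by rewrite /e !vtx_sigma.
have sigma4 : sigma (sigma e) = alpha d.
  by have := iter_order sigma_inj (alpha d); rewrite order4.
apply/existsP; exists (alpha e); apply/andP; split; first exact/eqP.
by rewrite /Defs.dend alphaK He sigma4 alphaK Hu eqxx orbT.
Qed.

Variable S : {set V}.
Local Notation Srel := (Srel alpha sigma vtx S).

Lemma Srel_sym : symmetric Srel.
Proof.
by move=> u v; apply/and3P/and3P=> [[Su Sv /Gadj_sym]|[Su Sv /Gadj_sym]].
Qed.

Lemma connect_S_free_walk y a b u v :
  a <= b -> vtx (iter a phi y) = inl u -> vtx (iter b phi y) = inl v ->
  (forall k, a <= k <= b -> ~~ inS S (vtx (iter k phi y))) ->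
  connect Srel u v.
Proof.
move=> le_ab Hu Hv S_free.
have notin k w : a <= k <= b -> vtx (iter k phi y) = inl w -> w \notin S.
  by move=> /S_free + Hw; rewrite Hw.
have Hphi k : phi (iter k phi y) = iter k.+1 phi y by rewrite iterS.
suff reach k w : a <= k <= b -> vtx (iter k phi y) = inl w -> connect Srel u w.
  by apply: reach Hv; rewrite le_ab leqnn.
elim/ltn_ind: k w => k IH w kb Hw.
have extend j w' : a <= j < k -> vtx (iter j phi y) = inl w' -> Gadj w' w ->
    connect Srel u w.
  move=> jk Hw' adj.
  apply: connect_trans (IH j _ w' _ Hw') (connect1 _); try lia.
  by rewrite /Defs.Srel (notin j w') ?(notin k w) ?adj //; lia.
case: (ltngtP a k) kb => [lt_ak | //| eq_ak] kb; last first.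
  by move: Hw; rewrite -eq_ak Hu => -[<-].
case: k lt_ak IH kb Hw extend => // k lt_ak IH kb Hw extend.
case Hk: (vtx (iter k phi y)) => [w' | c].
  by apply: (extend k w') => //; [lia | apply: Gadj_phi Hk _; rewrite Hphi].
have lt_ak' : a < k.
  suff : a != k by lia.
  by apply/eqP=> eq_ak; move: Hk; rewrite -eq_ak Hu.
case: k lt_ak lt_ak' IH kb Hw extend Hk => // k _ lt_ak IH kb Hw extend Hk.
have := @real_around_crossing (iter k phi y) c; rewrite Hphi => /(_ Hk) [+ _].
case Hk': (vtx (iter k phi y)) => [w'|//] _.
apply: (extend k w') => //; first lia.
by apply: (Gadj_phi_crossing (c := c) Hk'); rewrite !Hphi.
Qed.

Lemma S_between_flaps y a b u v :
  a <= b -> vtx (iter a phi y) = inl u -> vtx (iter b phi y) = inl v ->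
  u \notin S -> v \notin S -> ~~ connect Srel u v ->
  exists2 k, a < k < b & inS S (vtx (iter k phi y)).
Proof.
move=> le_ab Hu Hv uS vS disconnected.
have [k /andP[lt_ak Sk] | noS] :=
  pickP [pred k : 'I_b | (a < k) && inS S (vtx (iter k phi y))].
  by exists k; rewrite ?lt_ak ?ltn_ord.
case/negP: disconnected; apply: (connect_S_free_walk le_ab Hu Hv).
move=> k /andP[ak kb].
case: (ltngtP a k) ak => // [lt_ak | eq_ak] _; last by rewrite -eq_ak Hu.
case: (ltngtP k b) kb => // [lt_kb | eq_kb] _; last by rewrite eq_kb Hv.
by move: (noS (Ordinal lt_kb)); rewrite /= lt_ak /= => ->.
Qed.

Lemma phi_inj : injective phi.
Proof. by move=> d e /sigma_inj/(can_inj alphaK). Qed.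

Lemma S_occurrences_gt1 z y y' :
  fconnect phi z y -> fconnect phi z y' -> y != y' ->
  inS S (vtx y) -> inS S (vtx y') -> 1 < S_occurrences alpha sigma vtx S z.
Proof.
by move=> zy zy' neq Sy Sy'; apply/card_gt1P; exists y, y'; rewrite !inE zy zy'.
Qed.

Lemma S_edge_on_face z y :
  (forall d, dend d != vtx d) ->
  fconnect phi z y -> inS S (vtx y) -> inS S (dend y) ->
  1 < S_occurrences alpha sigma vtx S z.
Proof.
move=> no_loop zy Sy Sdy.
have zphi : fconnect phi z (phi y) := connect_trans zy (fconnect1 _ y).
apply: (S_occurrences_gt1 zy zphi _ Sy); last by rewrite vtx_phi.
by apply: (contra_neq _ (no_loop y)) => eq_y; rewrite -vtx_phi -eq_y.
Qed.

Lemma flaps_on_face z y1 y2 u1 u2 :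
  fconnect phi z y1 -> fconnect phi z y2 ->
  vtx y1 = inl u1 -> vtx y2 = inl u2 ->
  u1 \notin S -> u2 \notin S -> ~~ connect Srel u1 u2 ->
  1 < S_occurrences alpha sigma vtx S z.
Proof.
move=> zy1 zy2 Hu1 Hu2 u1S u2S disconnected.
have y1y2 : fconnect phi y1 y2.
  by apply: connect_trans zy2; rewrite (fconnect_sym phi_inj).
set n := order phi y1; set j := findex phi y1 y2.
have lt_jn : j < n by exact: findex_max.
have Hj : vtx (iter j phi y1) = inl u2 by rewrite iter_findex.
have Hn : vtx (iter n phi y1) = inl u1 by rewrite (iter_order phi_inj).
have [k1 /andP[_ lt_k1j] Sk1] :=
  S_between_flaps (leq0n j) Hu1 Hj u1S u2S disconnected.
have disconnected' : ~~ connect Srel u2 u1.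
  by rewrite (sym_connect_sym Srel_sym).
have [k2 /andP[lt_jk2 lt_k2n] Sk2] :=
  S_between_flaps (ltnW lt_jn) Hj Hn u2S u1S disconnected'.
apply: (S_occurrences_gt1 _ _ _ Sk1 Sk2).
- exact: connect_trans zy1 (fconnect_iter _ _ _).
- exact: connect_trans zy1 (fconnect_iter _ _ _).
apply: contraTneq (ltn_trans lt_k1j lt_jk2) => eq_iter.
have := findex_iter (ltn_trans lt_k1j lt_jn).
by rewrite eq_iter findex_iter // => ->; rewrite ltnn.
Qed.

End FaceWalk.

Theorem claim1 (V C D : finType) (alpha sigma : D -> D) (vtx : D -> V + C)
  (S : {set V}) :
  plane_map alpha sigma vtx ->
  crossings_ok alpha sigma vtx ->
  full alpha sigma vtx ->
  kite_assumption alpha sigma vtx ->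
  min_separating alpha sigma vtx S ->
  forall z : D, transition alpha sigma vtx S z ->
  2 <= S_occurrences alpha sigma vtx S z.
Proof.
move=> [[alphaK _ sigma_inj vtx_rot _] [no_loop _ _]] crossings G_full _ _ z.
have vtx_sigma d : vtx (sigma d) = vtx d.
  by apply/esym/eqP; rewrite vtx_rot fconnect1.
case=> [[y [zy Sy Sdy]] | [y1 [y2 [u1 [u2 [zy1 zy2 Hu1 Hu2 [u1S u2S apart]]]]]]].
  exact: (S_edge_on_face vtx_sigma no_loop zy Sy Sdy).
exact: (flaps_on_face alphaK sigma_inj vtx_sigma crossings G_full zy1 zy2 Hu1
  Hu2 u1S u2S apart).
Qed.
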